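(* Let $\alpha,\beta\in\mathbb{C}$ and let $\lambda_1,\lambda_2\notin\{0,-1,-2,\dots\}$ with $\lambda_1+\lambda_2\notin\{0,-1,-2,\dots\}$. The map $\Delta_{\lambda_1,\lambda_2}: U(sl_2)\to \mathrm{End}(V_{\lambda_1}\otimes V_{\lambda_2})$ given by $\Delta(H)=H\otimes\mathbb{I}+\mathbb{I}\otimes H$, $\Delta(E)=E\otimes \mathbb{I}+\mathbb{I}\otimes E$, $\Delta(F)=\frac{H^{(1)}-\lambda_1+2\alpha+2}{H^{(1)}+\lambda_1}F\otimes \mathbb{I}+\frac{H^{(2)}-\lambda_2+2\beta+2}{H^{(2)}+\lambda_2}\mathbb{I}\otimes F$ is an algebra homomorphism, and under it $V_{\lambda_1}\otimes V_{\lambda_2}\sim\bigoplus_{k\ge 0}V_{\lambda_1+\lambda_2+2k}$ with Clebsch--Gordan coefficients $R_n(k,N)=\binom{N}{n}\,{}_3F_2\left(-k,\ k+\alpha+\beta-N+1,\ -n;\ \alpha+1,\ -N;\ 1\right)$, subject to the constraint $\alpha+\beta+2=\lambda_1+\lambda_2$, i.e. $|\lambda_1+\lambda_2+2k,N-k\rangle=\sum_{n=0}^N R_n(k,N)|\lambda_1,n\rangle\otimes|\lambda_2,N-n\rangle$. When $\alpha+1=\lambda_1$ and $\beta+1=\lambda_2$ this reduces to the usual coproduct of $sl_2$.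
   Context: $sl_2$ is generated by $E,F,H$ with $[H,E]=2E$, $[H,F]=-2F$, $[E,F]=H$, and $V_\lambda$ is the lowest-weight Verma module with basis $|\lambda,n\rangle$, $n=0,1,\dots$, on which $H|\lambda,n\rangle=(\lambda+2n)|\lambda,n\rangle$, $E|\lambda,n\rangle=|\lambda,n+1\rangle$, $F|\lambda,n\rangle=-n(n+\lambda-1)|\lambda,n-1\rangle$. Notation: $H^{(1)}=H\otimes\mathbb{I}$, $H^{(2)}=\mathbb{I}\otimes H$, with $\mathbb{I}$ the identity; the ${}_3F_2$ is the generalized hypergeometric function (these are proportional to dual Hahn polynomials). *)

From HB Require Import structures.
From mathcomp Require Import all_boot all_order all_algebra.
From mathcomp Require Import reals complex.
Set Implicit Arguments. Unset Strict Implicit. Unset Printing Implicit Defensive.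
Import Order.TTheory GRing.Theory Num.Theory.
Local Open Scope ring_scope.

Section SL2Defs.
Variable K : fieldType.

(* A vector of the lowest-weight Verma module V_lambda is represented by its
   coordinate function n |-> coefficient of |lambda,n>.  A vector of
   V_l1 (x) V_l2 is represented by (n,m) |-> coefficient of |l1,n>(x)|l2,m>. *)
Definition vec := nat -> K.
Definition tvec := nat -> nat -> K.

Definition opH (l : K) (v : vec) : vec := fun n => (l + 2 * n%:R) * v n.
(* E|l,n> = |l,n+1> *)
Definition opE (v : vec) : vec := fun n => if n is n'.+1 then v n' else 0.
(* F|l,n> = -n(n+l-1)|l,n-1>, i.e. coefficient at n is -(n+1)(n+l) v(n+1) *)
Definition opF (l : K) (v : vec) : vec :=
  fun n => - (n.+1%:R * (n%:R + l)) * v n.+1.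

Definition fH (l : K) (f : K -> K) (v : vec) : vec := fun n => f (l + 2 * n%:R) * v n.

Definition ratio (l a : K) (h : K) : K := (h - l + 2 * a + 2) / (h + l).

Definition tens1 (X : vec -> vec) (w : tvec) : tvec := fun n m => X (fun i => w i m) n.
Definition tens2 (X : vec -> vec) (w : tvec) : tvec := fun n m => X (w n) m.

Definition DH (l1 l2 : K) (w : tvec) : tvec :=
  fun n m => tens1 (opH l1) w n m + tens2 (opH l2) w n m.
Definition DE (w : tvec) : tvec :=
  fun n m => tens1 opE w n m + tens2 opE w n m.
(* Delta(F) = (H1 - l1 + 2a + 2)/(H1 + l1) F(x)I + (H2 - l2 + 2b + 2)/(H2 + l2) I(x)F,
   the rational function of H acting after F (operator composition order). *)
Definition DF (l1 l2 a b : K) (w : tvec) : tvec :=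
  fun n m => tens1 (fun v => fH l1 (ratio l1 a) (opF l1 v)) w n m
           + tens2 (fun v => fH l2 (ratio l2 b) (opF l2 v)) w n m.

Definition tcomm (X Y : tvec -> tvec) (w : tvec) : tvec :=
  fun n m => X (Y w) n m - Y (X w) n m.

(* vectors of the (algebraic) tensor product: finitely supported *)
Definition fin_supp (w : tvec) : Prop :=
  exists M : nat, forall n m, (M <= n + m)%N -> w n m = 0.

Definition poch (x : K) (j : nat) : K := \prod_(i < j) (x + i%:R).

(* Terminating generalized hypergeometric function
   3F2(-m, a, b; c, d; 1) = sum_{j=0}^{m} (-m)_j (a)_j (b)_j / ((c)_j (d)_j j!)
   (the terms with j > m vanish since (-m)_j = 0). *)
Definition hyp3F2 (m : nat) (a b c d : K) : K :=
  \sum_(j < m.+1) poch (- m%:R) j * poch a j * poch b j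
                   / (poch c j * poch d j * (j`!)%:R).

Definition CG (a b : K) (n k N : nat) : K :=
  'C(N, n)%:R * hyp3F2 n (- k%:R) (k%:R + a + b + 1) (a + 1) (- N%:R).

(* |l1+l2+2k, j> := sum_{n=0}^{N} R_n(k,N) |l1,n>(x)|l2,N-n>,  N = k + j *)
Definition cgvec (a b : K) (k j : nat) : tvec :=
  fun n m => if n + m == (k + j)%N then CG a b n k (k + j) else 0.

End SL2Defs.

From Pilot Require Import Defs.
From HB Require Import structures.
From mathcomp Require Import all_boot all_order all_algebra.
From mathcomp Require Import reals complex.
From mathcomp Require Import ring zify.
Set Implicit Arguments.
Unset Strict Implicit.
Unset Printing Implicit Defensive.
Import Order.TTheory GRing.Theory Num.Theory.

(* On |l,n> the factor (H - l + 2a + 2) / (H + l) turns the coefficient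
   -(n+1)(n+l) of F into -(n+1)(n+a+1): Delta(F) is the undeformed coproduct
   of F on V_(a+1) (x) V_(b+1), while Delta(H) keeps the weights l1, l2, so the
   sl2 relations only need a + b + 2 = l1 + l2.
   Since C(N,n) (-n)_j / (-N)_j = C(N-j, n-j), R_n(k,N) is the sum over j of
   C(N-j, n-j) times the j-th term of 2F1(-k, k+a+b+1; a+1; 1).  Pascal's rule
   for these shifted binomials says that Delta(E) raises N by one, a
   Zeilberger certificate shows that Delta(F) kills the vector with N = k, and
   [E,F] = H then gives the action of Delta(F) by induction.  The matrix
   (R_n(k,N))_(k,n) factors as the lower triangular matrix of 2F1 terms times
   the upper unitriangular matrix of shifted binomials; its diagonal
   (-k)_k (k+a+b+1)_k / ((a+1)_k k!) does not vanish. *)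

Definition shifted_bin N n j : nat := if j <= n then 'C(N - j, n - j) else 0.

Lemma bin_mul_ffact N n j : j <= n -> n <= N ->
  'C(N, n) * n ^_ j = 'C(N - j, n - j) * N ^_ j.
Proof.
move=> le_jn le_nN.
have facts_gt0 : 0 < (n - j)`! * (N - n)`! by rewrite muln_gt0 !fact_gt0.
apply/eqP; rewrite -(eqn_pmul2r facts_gt0); apply/eqP.
rewrite mulnA -(mulnA _ (n ^_ j)) ffact_fact // -mulnA bin_fact //.
have -> : N - n = (N - j) - (n - j) by lia.
rewrite mulnAC bin_fact; last by lia.
by rewrite mulnC ffact_fact // (leq_trans le_jn).
Qed.

Lemma shifted_bin_pascal N n j : j <= N ->
  shifted_bin N n j + shifted_bin N n.+1 j = shifted_bin N.+1 n.+1 j.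
Proof.
rewrite /shifted_bin => le_jN; have [le_jn | lt_nj] := leqP j n.
  by rewrite ltnW // !subSn // binS addnC.
case: ifP => // le_jn1; have -> : j = n.+1 by lia.
by rewrite !subnn !bin0.
Qed.

Lemma shifted_bin0n N j : shifted_bin N.+1 0 j = shifted_bin N 0 j.
Proof. by rewrite /shifted_bin; case: ifP => // _; rewrite sub0n !bin0. Qed.

Lemma shifted_bin_succn k n j : j <= n.+1 ->
  (n.+1 - j) * shifted_bin k n.+1 j = (k - n) * shifted_bin k n j.
Proof.
rewrite /shifted_bin => le_jn1; rewrite le_jn1; case: leqP => [le_jn | lt_nj].
  by rewrite subSn // mul_bin_left; congr (_ * _); lia.
have -> : j = n.+1 by lia.
by rewrite subnn mul0n muln0.
Qed.

Lemma shifted_bin_succj k n i : i <= n ->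
  (n - i) * shifted_bin k n i = (k - i) * shifted_bin k n i.+1.
Proof.
rewrite /shifted_bin => le_in; rewrite le_in; case: (ltnP i n) => [lt_in | le_ni].
  have -> : n - i = (n - i.+1).+1 by lia.
  by rewrite -mul_bin_diag; congr (_ * 'C(_, _)); lia.
have -> : i = n by lia.
by rewrite subnn !mul0n muln0.
Qed.

Local Open Scope ring_scope.

Lemma sum_ord_vanishing (V : nmodType) (F : nat -> V) M1 M2 :
  (forall j, (M1 <= j)%N -> F j = 0) -> (forall j, (M2 <= j)%N -> F j = 0) ->
  \sum_(j < M1) F j = \sum_(j < M2) F j.
Proof.
wlog le_M12 : M1 M2 / (M1 <= M2)%N => [wlog_le F1 F2 | F1 _].
  case/orP: (leq_total M1 M2) => le_M; first exact: wlog_le.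
  by symmetry; apply: wlog_le.
rewrite -(subnKC le_M12) big_split_ord /=.
by rewrite [X in _ + X]big1 ?addr0 // => j _; rewrite F1 ?leq_addr.
Qed.

Section Pochhammer.
Variable K : fieldType.

Lemma poch0 (x : K) : poch x 0%N = 1.
Proof. by rewrite /poch big_ord0. Qed.

Lemma pochS (x : K) j : poch x j.+1 = poch x j * (x + j%:R).
Proof. by rewrite /poch big_ord_recr. Qed.

Lemma poch_oppn (n j : nat) : poch (- n%:R : K) j = (-1) ^+ j * (n ^_ j)%:R.
Proof.
elim: j => [|j IHj]; first by rewrite poch0 expr0 ffactn0 mul1r.
rewrite pochS IHj ffactnSr exprS natrM.
have [le_jn | lt_nj] := leqP j n; first by rewrite natrB //; ring.
by rewrite ffact_small //; ring.
Qed.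

Lemma poch_neq0 (x : K) j :
  (forall i, (i < j)%N -> x + i%:R != 0) -> poch x j != 0.
Proof. by move=> xi_neq0; apply/prodf_neq0 => i _; apply: xi_neq0. Qed.

End Pochhammer.

Section ClebschGordan.
Variables (K : numFieldType) (a b : K).

Definition term2F1 k j : K :=
  poch (- k%:R) j * poch (k%:R + a + b + 1) j / (poch (a + 1) j * (j`!)%:R).

Lemma term2F1_gt k j : (k < j)%N -> term2F1 k j = 0.
Proof.
by move=> lt_kj; rewrite /term2F1 poch_oppn ffact_small // mulr0 !mul0r.
Qed.

Lemma term2F1_0 k : term2F1 k 0%N = 1.
Proof. by rewrite /term2F1 !poch0 fact0 !mul1r invr1. Qed.

Lemma term2F1S k j : term2F1 k j.+1 = term2F1 k j
  * ((j%:R - k%:R) * (k%:R + a + b + 1 + j%:R)) / ((a + 1 + j%:R) * j.+1%:R).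
Proof. by rewrite /term2F1 !pochS factS natrM !invfM; ring. Qed.

Lemma bin_poch_ratio N n j : (j <= N)%N -> (n <= N)%N ->
  'C(N, n)%:R * poch (- n%:R) j / poch (- N%:R) j = (shifted_bin N n j)%:R :> K.
Proof.
move=> le_jN le_nN; rewrite !poch_oppn /shifted_bin.
have [le_jn | lt_nj] := leqP j n; last by rewrite ffact_small // !(mulr0, mul0r).
have ffact_neq0 : (N ^_ j)%:R != 0 :> K by rewrite pnatr_eq0 -lt0n ffact_gt0.
rewrite mulrCA -natrM bin_mul_ffact // natrM.
by field; rewrite signr_eq0 ffact_neq0.
Qed.

Lemma CG_sum n k N : (k <= N)%N ->
  CG a b n k N = \sum_(j < k.+1) (shifted_bin N n j)%:R * term2F1 k j.
Proof.
move=> le_kN; rewrite /CG /hyp3F2.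
have [lt_Nn | le_nN] := ltnP N n.
  rewrite bin_small // mul0r big1 // => j _; rewrite /shifted_bin.
  by case: ifP => le_jn; rewrite ?bin_small ?mul0r //; have := ltn_ord j; lia.
have termE j : 'C(N, n)%:R * (poch (- n%:R) j * poch (- k%:R) j
      * poch (k%:R + a + b + 1) j / (poch (a + 1) j * poch (- N%:R) j * (j`!)%:R))
    = 'C(N, n)%:R * poch (- n%:R) j / poch (- N%:R) j * term2F1 k j.
  by rewrite /term2F1 !invfM; ring.
rewrite mulr_sumr.
under eq_bigr => j _ do
  rewrite termE (bin_poch_ratio (leq_trans (ltn_ord j : (j <= n)%N) le_nN) le_nN).
apply: (@sum_ord_vanishing _ (fun j => (shifted_bin N n j)%:R * term2F1 k j))
  => j.
  by move=> lt_nj; rewrite /shifted_bin leqNgt lt_nj mul0r.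
by move=> lt_kj; rewrite term2F1_gt ?mulr0.
Qed.

Lemma CG_gt n k N : (N < n)%N -> CG a b n k N = 0.
Proof. by move=> lt_Nn; rewrite /CG bin_small // mul0r. Qed.

Lemma CG_pascal n k N : (k <= N)%N ->
  CG a b n k N + CG a b n.+1 k N = CG a b n.+1 k N.+1.
Proof.
move=> le_kN; rewrite !CG_sum ?(leqW le_kN) // -big_split /=.
apply: eq_bigr => j _; rewrite -mulrDl -natrD shifted_bin_pascal //.
exact: leq_trans (ltn_ord j : (j <= k)%N) le_kN.
Qed.

Lemma CG0_succ k N : (k <= N)%N -> CG a b 0%N k N.+1 = CG a b 0%N k N.
Proof.
move=> le_kN; rewrite !CG_sum ?(leqW le_kN) //.
by apply: eq_bigr => j _; rewrite shifted_bin0n.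
Qed.

Lemma CG_mx_factor N :
  \matrix_(k < N.+1, n < N.+1) CG a b n k N
  = \matrix_(k < N.+1, j < N.+1) term2F1 k j
    *m \matrix_(j < N.+1, n < N.+1) (shifted_bin N n j)%:R.
Proof.
apply/matrixP => k n; rewrite !mxE CG_sum; last exact: ltn_ord k.
under [RHS]eq_bigr do rewrite !mxE mulrC.
apply: (@sum_ord_vanishing _ (fun j => (shifted_bin N n j)%:R * term2F1 k j)).
  by move=> j lt_kj; rewrite term2F1_gt ?mulr0.
by move=> j lt_Nj; rewrite term2F1_gt ?mulr0 // (leq_trans (ltn_ord k) lt_Nj).
Qed.

Definition lw_cert k n j : K := if j is i.+1 then
  term2F1 k i * (shifted_bin k n i)%:R * (k%:R + a + b + 1 + i%:R) else 0.

Hypothesis ha : forall j : nat, a + 1 != - j%:R.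

Lemma lw_telescope n m k j : (n + m.+1)%N = k -> (j <= n.+1)%N ->
  n.+1%:R * (n.+1%:R + a) * ((shifted_bin k n.+1 j)%:R * term2F1 k j)
  + m.+1%:R * (m.+1%:R + b) * ((shifted_bin k n j)%:R * term2F1 k j)
  = m.+1%:R * (lw_cert k n j.+1 - lw_cert k n j).
Proof.
move=> k_def le_jn1.
have kE : k%:R = n%:R + m%:R + 1 :> K by rewrite -k_def addnS -addn1 !natrD.
have natS_neq0 i : (i.+1%:R : K) != 0 by rewrite pnatr_eq0.
have a1_neq0 i : a + 1 + i%:R != 0 by rewrite addr_eq0 ha.
have succn_rel := congr1 (fun x => x%:R : K) (@shifted_bin_succn k n j le_jn1).
rewrite /= !natrM (_ : (k - n = m.+1)%N) in succn_rel; last by lia.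
case: j le_jn1 succn_rel => [|i] le_in1 succn_rel.
  rewrite subn0 in succn_rel.
  rewrite -[(shifted_bin k n.+1 0)%:R](mulKf (natS_neq0 n)) succn_rel.
  by rewrite /lw_cert term2F1_0 kE -!natr1; field; rewrite natr1.
rewrite subSS in succn_rel.
have [lt_in | eq_in] := ltnP i n; last first.
  have -> : i = n by lia.
  rewrite /lw_cert /shifted_bin ltnn !leqnn !subnn !bin0 term2F1S kE -!natr1.
  by field; rewrite a1_neq0 natr1 natS_neq0.
have ni_neq0 : (n - i)%:R != 0 :> K by rewrite pnatr_eq0 subn_eq0 -ltnNge.
have succj_rel :=
  congr1 (fun x => x%:R : K) (@shifted_bin_succj k n i (ltnW lt_in)).
rewrite /= !natrM in succj_rel.
rewrite -[(shifted_bin k n.+1 i.+1)%:R](mulKf ni_neq0) succn_rel.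
rewrite /lw_cert -[(shifted_bin k n i)%:R](mulKf ni_neq0) succj_rel term2F1S.
have le_ik : (i <= k)%N by lia.
rewrite !natrB ?(ltnW lt_in) // in ni_neq0 *.
by rewrite kE -!natr1; field; rewrite ni_neq0 a1_neq0 natr1 natS_neq0.
Qed.

Lemma CG_lowest n m k : (n + m.+1)%N = k ->
  n.+1%:R * (n.+1%:R + a) * CG a b n.+1 k k
  + m.+1%:R * (m.+1%:R + b) * CG a b n k k = 0.
Proof.
move=> k_def; rewrite !CG_sum // !mulr_sumr -big_split /=.
pose G j := n.+1%:R * (n.+1%:R + a) * ((shifted_bin k n.+1 j)%:R * term2F1 k j)
  + m.+1%:R * (m.+1%:R + b) * ((shifted_bin k n j)%:R * term2F1 k j).
have -> : \sum_(j < k.+1) G j = \sum_(j < n.+2) G j.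
  apply: sum_ord_vanishing => j.
    by move=> lt_kj; rewrite /G term2F1_gt ?mulr0 ?addr0.
  move=> lt_n1j; rewrite /G /shifted_bin leqNgt lt_n1j leqNgt (ltnW lt_n1j).
  by rewrite !(mulr0, mul0r, addr0).
rewrite -(big_mkord xpredT G).
rewrite (telescope_sumr_eq (fun j => m.+1%:R * lw_cert k n j)) //.
  by rewrite /lw_cert /shifted_bin ltnn !(mulr0, mul0r) subr0.
by move=> j /andP[_ lt_jn2]; rewrite -mulrBr; apply: lw_telescope.
Qed.

Hypothesis hab : forall j : nat, a + b + 2 != - j%:R.

Lemma term2F1_diag_neq0 k : term2F1 k k != 0.
Proof.
have fact_neq0 : (k`!)%:R != 0 :> K by rewrite pnatr_eq0 -lt0n fact_gt0.
rewrite /term2F1 !mulf_neq0 ?invr_neq0 ?mulf_neq0 //.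
- by rewrite poch_oppn ffactnn mulf_neq0 ?signr_eq0.
- apply: poch_neq0 => i; case: k {fact_neq0} => // k _.
  have -> : k.+1%:R + a + b + 1 + i%:R = a + b + 2 + (k + i)%:R :> K.
    by rewrite -natr1 natrD; ring.
  by rewrite addr_eq0 hab.
- by apply: poch_neq0 => i _; rewrite addr_eq0 ha.
Qed.

Lemma CG_unitmx N : \matrix_(k < N.+1, n < N.+1) CG a b n k N \in unitmx.
Proof.
rewrite CG_mx_factor unitmx_mul -[X in _ && X]unitmx_tr !unitmxE !unitfE.
rewrite !det_trig.
- by apply/andP; split; apply/prodf_neq0 => i _;
    rewrite !mxE ?term2F1_diag_neq0 // /shifted_bin leqnn subnn bin0 oner_eq0.
- by apply/is_trig_mxP => i j lt_ij; rewrite !mxE /shifted_bin leqNgt lt_ij.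
- by apply/is_trig_mxP => i j lt_ij; rewrite mxE term2F1_gt.
Qed.

End ClebschGordan.

Section Coproduct.
Variables (K : numFieldType) (a b l1 l2 : K).

Lemma DH_diag (w : tvec K) n m :
  DH l1 l2 w n m = (l1 + l2 + 2 * (n + m)%:R) * w n m.
Proof. by rewrite /DH /tens1 /tens2 /opH natrD; ring. Qed.

Lemma DE_scale c (w w' : tvec K) : (forall n m, w n m = c * w' n m) ->
  forall n m, DE w n m = c * DE w' n m.
Proof.
rewrite /DE /tens1 /tens2 /opE => ww' n m.
by case: n m => [|n] [|m]; rewrite ?ww'; ring.
Qed.

Lemma DF_ext (w w' : tvec K) : w =2 w' ->
  forall n m, DF l1 l2 a b w n m = DF l1 l2 a b w' n m.
Proof. by move=> ww' n m; rewrite /DF /tens1 /tens2 /fH /opF !ww'. Qed.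

Lemma tcomm_DH_DE (w : tvec K) n m :
  tcomm (DH l1 l2) (@DE _) w n m = 2 * DE w n m.
Proof.
rewrite /tcomm DH_diag /DE /tens1 /tens2 /opE.
by case: n m => [|n] [|m]; rewrite ?DH_diag ?addnS ?addSn -?natr1; ring.
Qed.

(* [cgvec] adds indices with the semiring addition of [nat], not [addn]. *)
Lemma cgvecE k j n m :
  cgvec a b k j n m = if (n + m == k + j)%N then CG a b n k (k + j) else 0.
Proof. by []. Qed.

Lemma DH_cgvec k j n m : DH l1 l2 (cgvec a b k j) n m
  = (l1 + l2 + 2 * k%:R + 2 * j%:R) * cgvec a b k j n m.
Proof.
by rewrite DH_diag cgvecE; case: eqP => [->|_]; rewrite ?mulr0 // natrD; ring.
Qed.

Lemma DE_cgvec k j n m : DE (cgvec a b k j) n m = cgvec a b k j.+1 n m.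
Proof.
have le_kN : (k <= k + j)%N := leq_addr j k.
rewrite /DE /tens1 /tens2 /opE.
case: n m => [|n] [|m]; rewrite !cgvecE ?add0n ?addn0 ?addSn ?addnS ?eqSS /=.
- by rewrite addr0.
- by case: eqP => _; rewrite ?add0r // CG0_succ.
- case: eqP => [->|_]; rewrite ?addr0 //.
  by rewrite -CG_pascal // [X in _ + X]CG_gt ?addr0.
- by case: eqP => _; rewrite ?addr0 // CG_pascal.
Qed.

Hypothesis hl1 : forall j : nat, l1 != - j%:R.
Hypothesis hl2 : forall j : nat, l2 != - j%:R.

Lemma DF_opF (w : tvec K) n m :
  DF l1 l2 a b w n m = tens1 (opF (a + 1)) w n m + tens2 (opF (b + 1)) w n m.
Proof.
have l1n_neq0 : l1 + n%:R != 0 by rewrite addr_eq0 hl1.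
have l2m_neq0 : l2 + m%:R != 0 by rewrite addr_eq0 hl2.
rewrite /DF /tens1 /tens2 /fH /opF /Defs.ratio.
rewrite (_ : l1 + 2 * n%:R + l1 = 2 * (l1 + n%:R)); last by ring.
rewrite (_ : l2 + 2 * m%:R + l2 = 2 * (l2 + m%:R)); last by ring.
by field; rewrite l1n_neq0 l2m_neq0.
Qed.

Lemma tcomm_DH_DF (w : tvec K) n m :
  tcomm (DH l1 l2) (DF l1 l2 a b) w n m = - 2 * DF l1 l2 a b w n m.
Proof.
rewrite /tcomm DH_diag !DF_opF /tens1 /tens2 /opF !DH_diag ?addnS ?addSn -?natr1.
by ring.
Qed.

Hypothesis ha : forall j : nat, a + 1 != - j%:R.

Lemma DF_cgvec0 k n m : DF l1 l2 a b (cgvec a b k 0) n m = 0.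
Proof.
rewrite DF_opF /tens1 /tens2 /opF !cgvecE !addn0 addSnnS.
case: eqP => [k_def | _]; last by rewrite !mulr0 addr0.
by rewrite -[RHS]oppr0 -(CG_lowest b ha k_def) -!natr1; ring.
Qed.

Hypothesis hconstr : a + b + 2 = l1 + l2.

Lemma tcomm_DE_DF (w : tvec K) n m :
  tcomm (@DE _) (DF l1 l2 a b) w n m = DH l1 l2 w n m.
Proof.
rewrite /tcomm DH_diag -hconstr /DE /tens1 /tens2 /opE.
by case: n m => [|n] [|m];
  rewrite !DF_opF /tens1 /tens2 /opF -?natr1 ?natrD; ring.
Qed.

Lemma DF_cgvec k j n m : DF l1 l2 a b (cgvec a b k j.+1) n m
  = - (j.+1%:R * (j%:R + (l1 + l2 + 2 * k%:R))) * cgvec a b k j n m.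
Proof.
have lower i n' m' : DF l1 l2 a b (cgvec a b k i.+1) n' m'
    = DE (DF l1 l2 a b (cgvec a b k i)) n' m' - DH l1 l2 (cgvec a b k i) n' m'.
  rewrite (DF_ext (fun n m => esym (DE_cgvec k i n m))).
  by rewrite -(tcomm_DE_DF (cgvec a b k i)) /tcomm; ring.
elim: j n m => [|j IHj] n m; rewrite lower DH_cgvec.
  rewrite (@DE_scale 0 _ (cgvec a b k 0)) => [|n' m'].
    by ring.
  by rewrite DF_cgvec0 mul0r.
by rewrite (DE_scale IHj) DE_cgvec -!natr1; ring.
Qed.

End Coproduct.

Local Open Scope complex_scope.

Theorem mainTheorem6 (R : realType) (alpha beta l1 l2 : R[i])
  (hl1 : forall j : nat, l1 != - j%:R)
  (hl2 : forall j : nat, l2 != - j%:R)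
  (hl12 : forall j : nat, l1 + l2 != - j%:R)
  (hconstr : alpha + beta + 2 = l1 + l2) :
  (* Delta is an algebra homomorphism U(sl2) -> End(V_l1 (x) V_l2):
     the images of H, E, F satisfy the defining relations of sl2 *)
  [/\ (forall w : tvec R[i], fin_supp w -> forall n m,
         tcomm (DH l1 l2) (@DE _) w n m = 2 * DE w n m),
      (forall w : tvec R[i], fin_supp w -> forall n m,
         tcomm (DH l1 l2) (DF l1 l2 alpha beta) w n m
           = - 2 * DF l1 l2 alpha beta w n m),
      (forall w : tvec R[i], fin_supp w -> forall n m,
         tcomm (@DE _) (DF l1 l2 alpha beta) w n m = DH l1 l2 w n m),
      (* decomposition V_l1 (x) V_l2 ~ (+)_k V_{l1+l2+2k} with the given
         Clebsch--Gordan coefficients *)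
      ((forall j : nat, alpha + 1 != - j%:R) ->
       [/\ (forall k j n m, DH l1 l2 (cgvec alpha beta k j) n m
              = (l1 + l2 + 2 * k%:R + 2 * j%:R) * cgvec alpha beta k j n m),
           (forall k j n m, DE (cgvec alpha beta k j) n m
              = cgvec alpha beta k j.+1 n m),
           (forall k n m, DF l1 l2 alpha beta (cgvec alpha beta k 0) n m = 0),
           (forall k j n m, DF l1 l2 alpha beta (cgvec alpha beta k j.+1) n m
              = - (j.+1%:R * (j%:R + (l1 + l2 + 2 * k%:R)))
                  * cgvec alpha beta k j n m)
         & (forall N : nat,
              (\matrix_(k < N.+1, n < N.+1) CG alpha beta n k N)
                \in unitmx)])
    & (alpha + 1 = l1 -> beta + 1 = l2 ->
       forall (w : tvec R[i]) n m, DF l1 l2 alpha beta w n m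
         = tens1 (opF l1) w n m + tens2 (opF l2) w n m)].
Proof.
have hab j : alpha + beta + 2 != - j%:R by rewrite hconstr hl12.
split.
- by move=> w _; apply: tcomm_DH_DE.
- by move=> w _; apply: tcomm_DH_DF.
- by move=> w _; apply: tcomm_DE_DF.
- move=> ha; split.
  + exact: DH_cgvec.
  + exact: DE_cgvec.
  + exact: DF_cgvec0.
  + exact: DF_cgvec.
  + exact: CG_unitmx.
- by move=> a1E b1E w n m; rewrite DF_opF ?a1E ?b1E.
Qed.
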